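(* For all integers $n,d,k,p\ge0$, $$P_p(n,\omega^d\cdot k)=\begin{cases}0 & d=0,\ n>k\\ 1 & n=0,\ p=0\\ 0 & n=0,\ p\ge1\\ \binom{k}{n} & d=0,\ 1\le n\le k,\ p=0\\ 0 & d=0,\ 1\le n\le k,\ p\ge1\\ k^n & d=1,\ n\ge1,\ n=p\\ 0 & d=1,\ n\ge1,\ n\ne p\\ 0 & d\ge2,\ n\ge1,\ p=0\\ \displaystyle k\sum_{j=1}^{n}\sum_{i=0}^{p-1}\binom{p-1}{i}P_i(j,\omega^{d-1})\,P_{p-1-i}(n-j,\omega^d\cdot k) & d\ge2,\ n\ge1,\ p\ge1.\end{cases}$$
   Context: Fix integers $n,d,k\ge0$. Every $\beta<\omega^d\cdot k$ is uniquely written $\omega^d b+\omega^{d-1}a_{d-1}+\cdots+a_0$ with $0\le b<k$, $a_j\in\mathbb{N}$. A coloring rule (CR) on $\binom{\omega^d\cdot k}{n}$ is a pair $(\mathcal{Y},\preceq)$ with $\mathcal{Y}:\{1,\dots,n\}\to\{0,\dots,k-1\}$ and $\preceq$ a total preorder on $I=\{(i,j):1\le i\le n,0\le j<d\}$ (write $\equiv$ for the induced equivalence and $\prec$ for the strict part) such that: (1) if $d\ge1$, $(i,0)\prec(i',0)$ for $i<i'$; if $d=0$, $\mathcal{Y}(i)<\mathcal{Y}(i')$ for $i<i'$; (2) $(i,j)\equiv(i',j)$ for some $j$ implies $\mathcal{Y}(i)=\mathcal{Y}(i')$; (3) $(i,j)\prec(i,j')$ for $j>j'$; (4) $(i,j)\equiv(i',j')$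 implies $j=j'$; (5) for $j>0$, $(i,j)\not\equiv(i',j)$ implies $(i,j-1)\not\equiv(i',j-1)$. The size of a CR is the number of $\equiv$-classes of $I$. $P_p(n,\omega^d\cdot k)$ is the number of CRs of size $p$ on $\binom{\omega^d\cdot k}{n}$, and $P_p(n,\omega^{d})$ means $P_p(n,\omega^{d}\cdot1)$. *)

From mathcomp Require Import all_boot.
Set Implicit Arguments. Unset Strict Implicit. Unset Printing Implicit Defensive.

(* Index set I = {1..n} x {0..d-1}; the index i in {1..n} is represented by
   the ordinal i-1 : 'I_n (order preserved).  Colours b in {0..k-1} : 'I_k. *)
Definition CRidx (n d : nat) := ('I_n * 'I_d)%type.

(* A candidate coloring rule: the map Y and the (boolean) relation <= on I,
   given as a finite function on pairs. *)
Definition CRcand (n d k : nat) :=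
  ({ffun 'I_n -> 'I_k} * {ffun CRidx n d * CRidx n d -> bool})%type.

Section CR.
Variables n d k : nat.
Implicit Types c : CRcand n d k.

Definition cr_le c (x y : CRidx n d) : bool := c.2 (x, y).
Definition cr_eqv c (x y : CRidx n d) : bool := cr_le c x y && cr_le c y x.
Definition cr_lt c (x y : CRidx n d) : bool := cr_le c x y && ~~ cr_le c y x.

Definition total_preorder c : bool :=
  [forall x, forall y, cr_le c x y || cr_le c y x] &&
  [forall x, forall y, forall z, cr_le c x y ==> cr_le c y z ==> cr_le c x z].

Definition cr_cond1 c : bool :=
  if 0 < d then
    [forall i : 'I_n, forall i' : 'I_n, forall j : 'I_d,
       (val j == 0) ==> (i < i') ==> cr_lt c (i, j) (i', j)]
  else
    [forall i : 'I_n, forall i' : 'I_n, (i < i') ==> (c.1 i < c.1 i')].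

Definition cr_cond2 c : bool :=
  [forall i : 'I_n, forall i' : 'I_n, forall j : 'I_d,
     cr_eqv c (i, j) (i', j) ==> (c.1 i == c.1 i')].

Definition cr_cond3 c : bool :=
  [forall i : 'I_n, forall j : 'I_d, forall j' : 'I_d,
     (j' < j) ==> cr_lt c (i, j) (i, j')].

Definition cr_cond4 c : bool :=
  [forall i : 'I_n, forall i' : 'I_n, forall j : 'I_d, forall j' : 'I_d,
     cr_eqv c (i, j) (i', j') ==> (j == j')].

Definition cr_cond5 c : bool :=
  [forall i : 'I_n, forall i' : 'I_n, forall j : 'I_d, forall j' : 'I_d,
     (val j == (val j').+1) ==> ~~ cr_eqv c (i, j) (i', j) ==>
       ~~ cr_eqv c (i, j') (i', j')].

Definition is_CR c : bool :=
  [&& total_preorder c, cr_cond1 c, cr_cond2 c, cr_cond3 c, cr_cond4 c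
    & cr_cond5 c].

Definition cr_size c : nat :=
  #|[set [set y | cr_eqv c x y] | x : CRidx n d]|.

End CR.

Definition Pcount (p n d k : nat) : nat :=
  #|[set c : CRcand n d k | is_CR c && (cr_size c == p)]|.

From mathcomp Require Import all_boot zify.
Set Implicit Arguments. Unset Strict Implicit. Unset Printing Implicit Defensive.

Lemma enum_val_ltn m (A : {pred 'I_m}) (a b : 'I_#|A|) :
  (enum_val a < enum_val b) = (a < b).
Proof.
have sorted_A : sorted ltn (map val (enum A)).
  have -> : enum A = [seq x <- enum 'I_m | x \in A] by rewrite {2}/enum_mem filter_predT.
  rewrite sorted_map; apply: sorted_filter; first exact: ltn_trans.
  by rewrite -sorted_map val_enum_ord iota_ltn_sorted.
have incr (a' b' : 'I_#|A|) : a' < b' -> enum_val a' < enum_val b'.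
  move=> lt_ab; rewrite (enum_val_nth (enum_val a') a') (enum_val_nth (enum_val a') b').
  have sz : size (enum A) = #|A| by rewrite cardE.
  rewrite -(nth_map (enum_val a') 0 val) ?sz // -(nth_map (enum_val a') 0 val) ?sz //.
  by apply: (sorted_ltn_nth ltn_trans) => //; rewrite inE size_map -cardE.
case: (ltngtP a b) => [/incr -> // | /incr | /val_inj -> ]; last by rewrite !ltnn.
by move/ltnW; rewrite leqNgt => /negbTE.
Qed.

Lemma sorted_map_enum_ord n (f : 'I_n -> nat) :
  {homo f : i j / i < j} -> sorted ltn (map f (enum 'I_n)).
Proof.
move=> f_incr; apply: (homo_sorted f_incr).
by have := iota_ltn_sorted 0 n; rewrite -val_enum_ord sorted_map.
Qed.

Lemma incr_ord_eq n (f g : 'I_n -> nat) :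
  {homo f : i j / i < j} -> {homo g : i j / i < j} -> codom f =i codom g -> f =1 g.
Proof.
move=> f_incr g_incr fg i.
have : map f (enum 'I_n) = map g (enum 'I_n).
  by apply: (irr_sorted_eq ltn_trans ltnn); rewrite -?codomE // sorted_map_enum_ord.
move/(congr1 (nth 0 ^~ i)).
by rewrite (nth_map i) ?size_enum_ord // nth_ord_enum (nth_map i) ?size_enum_ord // nth_ord_enum.
Qed.

Lemma card_in_imset_kernel (T U V : finType) (f : T -> U) (g : T -> V) (A : {pred T}) :
  {in A &, forall x y, (f x == f y) = (g x == g y)} -> #|f @: A| = #|g @: A|.
Proof.
move=> fg; case: (pickP (mem A)) => [x0 Ax0 | A0]; last first.
  have no_image : forall (W : finType) (w : T -> W), w @: A = set0.
    move=> W w; apply/setP => u; rewrite in_set0; apply/negbTE/imsetP => -[x Ax _].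
    by have := A0 x; rewrite /= Ax.
  by rewrite !no_image !cards0.
pose phi u := g (odflt x0 [pick x in A | f x == u]).
have phiK : {in A, forall x, phi (f x) = g x}.
  move=> x Ax; rewrite /phi; case: pickP => [y /andP[Ay /eqP fy] | /(_ x)] /=.
    by apply/eqP; rewrite -fg ?fy.
  by rewrite Ax eqxx.
have -> : g @: A = phi @: (f @: A).
  by rewrite -imset_comp; apply: eq_in_imset => x Ax /=; rewrite phiK.
rewrite [RHS]card_in_imset // => _ _ /imsetP[x Ax ->] /imsetP[y Ay ->].
by rewrite !phiK // => /eqP; rewrite -fg // => /eqP.
Qed.

Lemma card_ord_ltn p m : m <= p -> #|[set v : 'I_p | v < m]| = m.
Proof.
move=> le_mp; have -> : [set v : 'I_p | v < m] = widen_ord le_mp @: 'I_m.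
  apply/setP => v; rewrite inE; apply/idP/imsetP => [lt_vm | [u _ ->]]; last exact: (ltn_ord u).
  by exists (Ordinal lt_vm); last exact: val_inj.
by rewrite card_imset ?card_ord // => u v [] /val_inj.
Qed.

Section PreorderRank.
Variables (T : finType) (le : rel T).
Hypotheses (le_total : total le) (le_trans : transitive le).

Definition pre_class x := [set y | le x y && le y x].
Definition rank x := #|[set pre_class y | y in [set y | ~~ le x y]]|.

Local Notation classes := [set pre_class x | x in T].

Lemma le_refl x : le x x.
Proof. by have := le_total x x; rewrite orbb. Qed.

Lemma pre_class_eq x y : (pre_class x == pre_class y) = le x y && le y x.
Proof.
apply/eqP/andP => [eq_xy | [le_xy le_yx]].
  have : y \in pre_class x by rewrite eq_xy inE le_refl.
  by rewrite inE => /andP.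
apply/setP => z; rewrite !inE.
by apply/andP/andP => -[le1 le2]; split; apply: le_trans; eassumption.
Qed.

Lemma below_sub x y : le x y -> [set z | ~~ le x z] \subset [set z | ~~ le y z].
Proof. by move=> le_xy; apply/subsetP => z; rewrite !inE; apply: contra; apply: le_trans. Qed.

Lemma pre_class_notin_below x :
  pre_class x \notin [set pre_class y | y in [set y | ~~ le x y]].
Proof. by apply/imsetP => -[y]; rewrite inE => /negbTE not_le_xy /eqP; rewrite pre_class_eq not_le_xy. Qed.

Lemma rank_ltn x y : ~~ le y x -> rank x < rank y.
Proof.
move=> lt_xy; have le_xy : le x y by have := le_total x y; rewrite (negbTE lt_xy) orbF.
apply: proper_card; rewrite properE imsetS ?below_sub //=.
by apply/subsetPn; exists (pre_class x); [apply: imset_f; rewrite inE | exact: pre_class_notin_below].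
Qed.

Lemma rank_le x y : le x y = (rank x <= rank y).
Proof.
apply/idP/idP => [le_xy | ]; first exact/subset_leq_card/imsetS/below_sub.
by apply: contraLR; rewrite -ltnNge; apply: rank_ltn.
Qed.

Lemma rank_lt_card x : rank x < #|classes|.
Proof.
apply: proper_card; rewrite properE imsetS /=; last exact/subsetP.
by apply/subsetPn; exists (pre_class x); [exact: imset_f | exact: pre_class_notin_below].
Qed.


Lemma rank_onto v : v < #|classes| -> exists x, rank x = v.
Proof.
move=> lt_v; pose r x : 'I_#|classes| := Ordinal (rank_lt_card x).
have card_r : #|r @: T| = #|classes|.
  apply/esym/card_in_imset_kernel => x y _ _.
  by rewrite pre_class_eq -val_eqE /= eqn_leq -!rank_le.
have r_onto : r @: T = setT.
  by apply/eqP; rewrite eqEcard subsetT cardsT card_ord card_r leqnn.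
have : Ordinal lt_v \in r @: T by rewrite r_onto inE.
by case/imsetP => x _ [eq_v]; exists x.
Qed.

Lemma rank_unique (F : T -> nat) p :
    (forall x y, le x y = (F x <= F y)) ->
    (forall x, F x < p) -> (forall v, v < p -> exists x, F x = v) ->
  #|classes| = p /\ rank =1 F.
Proof.
move=> leF ltF ontoF; pose G x : 'I_p := Ordinal (ltF x).
have kerG (A : {pred T}) : #|[set pre_class x | x in A]| = #|G @: A|.
  apply: card_in_imset_kernel => x y _ _.
  by rewrite pre_class_eq !leF -eqn_leq -val_eqE.
have Gonto (v : 'I_p) : exists x, v = G x.
  by have [x Fx] := ontoF v (ltn_ord v); exists x; apply: val_inj.
split => [|x].
  rewrite kerG (_ : G @: T = setT) ?cardsT ?card_ord //.
  by apply/setP => v; rewrite inE; have [y ->] := Gonto v; exact: imset_f.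
rewrite /rank kerG (_ : G @: _ = [set v : 'I_p | v < F x]) ?card_ord_ltn 1?ltnW //.
apply/setP => v; rewrite inE; apply/imsetP/idP => [[y] | ].
  by rewrite inE leF -ltnNge => ? ->.
by have [y ->] := Gonto v; exists y; rewrite // inE leF -ltnNge.
Qed.

End PreorderRank.

Section CRRank.
Variables n d k : nat.
Implicit Types c : CRcand n d k.

Definition cr_rank c := rank (cr_le c).

Lemma CR_total c : is_CR c -> total (cr_le c).
Proof. by case/and3P => /andP[/forallP tot _] _ _ x y; move/forallP: (tot x). Qed.

Lemma CR_trans c : is_CR c -> transitive (cr_le c).
Proof.
case/and3P => /andP[_ /forallP tr] _ _ y x z.
by move/forallP: (tr x) => /(_ y) /forallP /(_ z) /implyP le_xy /le_xy /implyP.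
Qed.

Lemma cr_le_rank c : is_CR c -> forall x y, cr_le c x y = (cr_rank c x <= cr_rank c y).
Proof. by move=> crc; apply: rank_le; [apply: CR_total | apply: CR_trans]. Qed.

Lemma cr_rank_lt c x : is_CR c -> cr_rank c x < cr_size c.
Proof. by move=> crc; apply: rank_lt_card; [apply: CR_total | apply: CR_trans]. Qed.

Lemma cr_rank_onto c v : is_CR c -> v < cr_size c -> exists x, cr_rank c x = v.
Proof. by move=> crc; apply: rank_onto; [apply: CR_total | apply: CR_trans]. Qed.

End CRRank.

Section RankRule.
Variables n D k : nat.
Local Notation d := D.+1.

Record rank_rule (Y : 'I_n -> 'I_k) (F : CRidx n d -> nat) : Prop := RankRule {
  rank_top_incr : forall i i' : 'I_n, i < i' -> F (i, ord0) < F (i', ord0);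
  rank_color : forall i i' j, F (i, j) = F (i', j) -> Y i = Y i';
  rank_row_decr : forall i (j j' : 'I_d), j' < j -> F (i, j) < F (i, j');
  rank_col : forall i i' j j', F (i, j) = F (i', j') -> j = j';
  rank_eq_succ : forall i i' (j j' : 'I_d),
    j = j'.+1 :> nat -> F (i, j') = F (i', j') -> F (i, j) = F (i', j)
}.

Lemma is_CR_rank_rule (c : CRcand n d k) (F : CRidx n d -> nat) :
  (forall x y, cr_le c x y = (F x <= F y)) -> is_CR c <-> rank_rule c.1 F.
Proof.
move=> leF.
have ltF x y : cr_lt c x y = (F x < F y) by rewrite /cr_lt !leF -ltnNge andb_idl // => /ltnW.
have eqvF x y : cr_eqv c x y = (F x == F y) by rewrite /cr_eqv !leF eqn_leq.
split.
  case/and5P=> _ /forallP c1 /forallP c2 /forallP c3 /andP[/forallP c4 /forallP c5].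
  split.
  - move=> i i' lt_ii'; rewrite -ltF.
    by move/forallP: (c1 i) => /(_ i') /forallP /(_ ord0) /implyP /(_ isT) /implyP; apply.
  - move=> i i' j eqF; apply/eqP.
    by move/forallP: (c2 i) => /(_ i') /forallP /(_ j) /implyP; apply; rewrite eqvF eqF.
  - move=> i j j' lt_jj'; rewrite -ltF.
    by move/forallP: (c3 i) => /(_ j) /forallP /(_ j') /implyP; apply.
  - move=> i i' j j' eqF; apply/eqP.
    move/forallP: (c4 i) => /(_ i') /forallP /(_ j) /forallP /(_ j') /implyP; apply.
    by rewrite eqvF eqF.
  - move=> i i' j j' jS eqF; apply/eqP; rewrite -eqvF; apply/negPn/negP => neq.
    move/forallP: (c5 i) => /(_ i') /forallP /(_ j) /forallP /(_ j') /implyP.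
    by move=> /(_ (introT eqP jS)) /implyP /(_ neq); rewrite eqvF eqF eqxx.
case=> F1 F2 F3 F4 F5; apply/and5P; split.
- apply/andP; split; apply/forallP => x; apply/forallP => y; first by rewrite !leF leq_total.
  by apply/forallP => z; rewrite !leF; apply/implyP => le_xy; apply/implyP; apply: leq_trans.
- apply/forallP => i; apply/forallP => i'; apply/forallP => j.
  apply/implyP => /eqP j0; apply/implyP => lt_ii'.
  by rewrite (_ : j = ord0) ?ltF ?F1 //; apply: val_inj.
- apply/forallP => i; apply/forallP => i'; apply/forallP => j.
  by apply/implyP; rewrite eqvF => /eqP /F2 ->.
- apply/forallP => i; apply/forallP => j; apply/forallP => j'.
  by apply/implyP => lt_jj'; rewrite ltF F3.
- apply/andP; split; apply/forallP => i; apply/forallP => i'; apply/forallP => j; apply/forallP => j'.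
    by apply/implyP; rewrite eqvF => /eqP /F4 ->.
  apply/implyP => /eqP jS; apply/implyP; rewrite !eqvF; apply: contra => /eqP eqF.
  by rewrite (F5 i i' j j' jS eqF).
Qed.

Lemma CR_rank_rule (c : CRcand n d k) : is_CR c -> rank_rule c.1 (cr_rank c).
Proof. by move=> crc; apply/(is_CR_rank_rule (cr_le_rank crc)). Qed.

End RankRule.

Definition chart_row d k p := ('I_k * {ffun 'I_d -> 'I_p})%type.
Definition chart d k p := {ffun 'I_p -> option (chart_row d k p)}.

Section Chart.
Variables d k p : nat.
Implicit Type h : chart d k p.

Definition row_ok (t : 'I_p) (P : {ffun 'I_d -> 'I_p}) : bool :=
  [forall l : 'I_d, (val l == 0) ==> (P l == t)] &&
  [forall l : 'I_d, forall l' : 'I_d, (l' < l) ==> (P l < P l')].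

Definition rows_ok (c : 'I_k) (P : {ffun 'I_d -> 'I_p}) (c' : 'I_k) (P' : {ffun 'I_d -> 'I_p}) : bool :=
  [forall l : 'I_d, forall l' : 'I_d,
     [&& (P l == P' l') ==> (l == l'), (P l == P' l) ==> (c == c') &
         ((val l == (val l').+1) && (P l' == P' l')) ==> (P l == P' l)]].

Definition chart_ok h : bool :=
  [&& [forall t, forall c, forall P, (h t == Some (c, P)) ==> row_ok t P],
      [forall t, forall c, forall P, forall t', forall c', forall P',
         (h t == Some (c, P)) ==> (h t' == Some (c', P')) ==> rows_ok c P c' P'] &
      [forall u, [exists t, exists c, exists P, exists l : 'I_d,
         (h t == Some (c, P)) && (P l == u)]]].

Definition nrows h := #|[set t | h t != None]|.

Record chart_rule h : Prop := ChartRule {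
  chart_top : forall t c P, h t = Some (c, P) -> forall l : 'I_d, l = 0 :> nat -> P l = t;
  chart_row_decr : forall t c P, h t = Some (c, P) ->
    forall l l' : 'I_d, l' < l -> P l < P l';
  chart_col : forall t c P t' c' P', h t = Some (c, P) -> h t' = Some (c', P') ->
    forall l l', P l = P' l' -> l = l';
  chart_color : forall t c P t' c' P', h t = Some (c, P) -> h t' = Some (c', P') ->
    forall l, P l = P' l -> c = c';
  chart_eq_succ : forall t c P t' c' P', h t = Some (c, P) -> h t' = Some (c', P') ->
    forall l l' : 'I_d, l = l'.+1 :> nat -> P l' = P' l' -> P l = P' l;
  chart_cover : forall u, exists t c P l, h t = Some (c, P) /\ P l = u
}.

Lemma chartP h : reflect (chart_rule h) (chart_ok h).
Proof.
apply: (iffP and3P) => [[/forallP rows /forallP pairs /forallP cover] | [C1 C2 C3 C4 C5 C6]].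
  have row t c P : h t = Some (c, P) -> row_ok t P.
    by move=> E; move/forallP: (rows t) => /(_ c) /forallP /(_ P) /implyP; apply; rewrite E.
  have pair t c P t' c' P' l l' : h t = Some (c, P) -> h t' = Some (c', P') ->
      [&& (P l == P' l') ==> (l == l'), (P l == P' l) ==> (c == c') &
          ((val l == (val l').+1) && (P l' == P' l')) ==> (P l == P' l)].
    move=> E E'; move/forallP: (pairs t) => /(_ c) /forallP /(_ P) /forallP /(_ t').
    move=> /forallP /(_ c') /forallP /(_ P') /implyP /(_ (introT eqP E)) /implyP.
    by move=> /(_ (introT eqP E')) /forallP /(_ l) /forallP /(_ l').
  split.
  - by move=> t c P /row /andP[/forallP top _] l l0; exact/eqP/(implyP (top l))/eqP.
  - by move=> t c P /row /andP[_ /forallP decr] l l'; apply/implyP/(forallP (decr l)).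
  - by move=> t c P t' c' P' E E' l l' /eqP eqPl; case/and3P: (pair _ _ _ _ _ _ l l' E E') => /implyP/(_ eqPl)/eqP.
  - by move=> t c P t' c' P' E E' l /eqP eqPl; case/and3P: (pair _ _ _ _ _ _ l l E E') => _ /implyP/(_ eqPl)/eqP.
  - move=> t c P t' c' P' E E' l l' lS eqPl'.
    case/and3P: (pair _ _ _ _ _ _ l l' E E') => _ _ /implyP imp.
    by apply/eqP/imp; rewrite /= lS eqPl' !eqxx.
  - move=> u; have /existsP[t /existsP[c /existsP[P /existsP[l /andP[/eqP E /eqP e]]]]] := cover u.
    by exists t, c, P, l.
split; apply/forallP => t.
- apply/forallP => c; apply/forallP => P; apply/implyP => /eqP E; apply/andP; split.
    by apply/forallP => l; apply/implyP => /eqP l0; rewrite (C1 _ _ _ E).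
  by apply/forallP => l; apply/forallP => l'; apply/implyP; apply: C2 E l l'.
- apply/forallP => c; apply/forallP => P; apply/forallP => t'; apply/forallP => c'.
  apply/forallP => P'; apply/implyP => /eqP E; apply/implyP => /eqP E'.
  apply/forallP => l; apply/forallP => l'; apply/and3P; split; apply/implyP.
  + by move/eqP/(C3 _ _ _ _ _ _ E E') ->.
  + by move/eqP/(C4 _ _ _ _ _ _ E E') ->.
  + by case/andP => /eqP lS /eqP eqP'; rewrite (C5 _ _ _ _ _ _ E E' l l' lS eqP').
- have [t' [c [P [l [E e]]]]] := C6 t.
  by apply/existsP; exists t'; apply/existsP; exists c; apply/existsP; exists P; apply/existsP; exists l; rewrite E e !eqxx.
Qed.

Lemma chart_eq_up h : chart_rule h -> forall t c P t' c' P',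
  h t = Some (c, P) -> h t' = Some (c', P') ->
  forall l l' : 'I_d, l' <= l -> P l' = P' l' -> P l = P' l.
Proof.
move=> h_ok t c P t' c' P' E E' l l' le_l'l eq_l'.
have [m def_l] : exists m, val l = val l' + m by exists (l - l'); rewrite subnKC.
elim: m l def_l {le_l'l} => [|m IH] l def_l; first by rewrite (_ : l = l') //; apply: val_inj; rewrite /= def_l addn0.
have lt_md : l' + m < d by move: def_l (ltn_ord l) => /=; lia.
apply: (chart_eq_succ h_ok E E' (l' := Ordinal lt_md)); first by rewrite /= def_l addnS.
exact: IH.
Qed.

End Chart.

Section ChartOfRanks.
Variables n D k p : nat.
Local Notation d := D.+1.
Variables (Y : 'I_n -> 'I_k) (F : CRidx n d -> nat).

Definition rank_row (t : 'I_p) (i : 'I_n) : {ffun 'I_d -> 'I_p} :=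
  [ffun l => insubd t (F (i, l))].

Definition chart_of : chart d k p :=
  [ffun t : 'I_p => if [pick i | F (i, ord0) == t] is Some i then Some (Y i, rank_row t i) else None].

Hypotheses (F_rule : rank_rule Y F) (F_lt : forall x, F x < p).

Lemma rank_rowE t i l : rank_row t i l = F (i, l) :> nat.
Proof. by rewrite ffunE val_insubd F_lt. Qed.

Lemma top_rank_inj i i' : F (i, ord0) = F (i', ord0) -> i = i'.
Proof.
move=> eqF; apply: val_inj; case: (ltngtP i i') => // /(rank_top_incr F_rule).
  by rewrite eqF ltnn.
by rewrite eqF ltnn.
Qed.

Lemma chart_of_top i (t : 'I_p) : F (i, ord0) = t -> chart_of t = Some (Y i, rank_row t i).
Proof.
move=> Ft; rewrite ffunE; case: pickP => [i' /eqP Ft' | /(_ i)]; last by rewrite Ft eqxx.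
by rewrite (@top_rank_inj i' i) // Ft Ft'.
Qed.

Lemma chart_ofP t r : chart_of t = Some r -> exists2 i, F (i, ord0) = t & r = (Y i, rank_row t i).
Proof. by rewrite ffunE; case: pickP => // i /eqP Ft [<-]; exists i. Qed.

Lemma chart_of_rows (t : 'I_p) : (chart_of t != None) = (val t \in codom (fun i => F (i, ord0))).
Proof.
apply/idP/codomP => [| [i Ft]]; last by rewrite (chart_of_top (esym Ft)).
by case E: (chart_of t) => [r|] // _; have [i Ft _] := chart_ofP E; exists i.
Qed.

Lemma chart_of_rule (F_onto : forall v, v < p -> exists x, F x = v) : chart_rule chart_of.
Proof.
split.
- move=> t c P /chart_ofP [i Ft [_ ->]] l l0; apply: val_inj.
  by rewrite /= rank_rowE -Ft; congr F; congr (_, _); apply: val_inj.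
- move=> t c P /chart_ofP [i _ [_ ->]] l l' lt_l; rewrite !rank_rowE.
  exact: (rank_row_decr F_rule).
- move=> t c P t' c' P' /chart_ofP [i _ [_ ->]] /chart_ofP [i' _ [_ ->]] l l' /(congr1 (@nat_of_ord p)).
  by rewrite !rank_rowE; apply: (rank_col F_rule).
- move=> t c P t' c' P' /chart_ofP [i _ [-> ->]] /chart_ofP [i' _ [-> ->]] l /(congr1 (@nat_of_ord p)).
  by rewrite !rank_rowE; apply: (rank_color F_rule).
- move=> t c P t' c' P' /chart_ofP [i _ [_ ->]] /chart_ofP [i' _ [_ ->]] l l' lS /(congr1 (@nat_of_ord p)).
  by rewrite !rank_rowE => eqF; apply: val_inj; rewrite /= !rank_rowE (rank_eq_succ F_rule lS eqF).
- move=> u; have [[i l] Fu] := F_onto _ (ltn_ord u); pose t := Ordinal (F_lt (i, ord0)).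
  exists t, (Y i), (rank_row t i), l; split; first exact: chart_of_top.
  by apply: val_inj; rewrite /= rank_rowE.
Qed.

Lemma nrows_chart_of : nrows chart_of = n.
Proof.
pose top i : 'I_p := Ordinal (F_lt (i, ord0)).
rewrite /nrows; have -> : [set t | chart_of t != None] = top @: 'I_n.
  apply/setP => t; rewrite inE chart_of_rows.
  by apply/codomP/imsetP => [[i Ft] | [i _ ->]]; exists i => //; apply: val_inj.
by rewrite card_imset ?card_ord // => i i' [/top_rank_inj].
Qed.

End ChartOfRanks.

Lemma chart_of_inj n D k p (Y Y' : 'I_n -> 'I_k) (F F' : CRidx n D.+1 -> nat) :
    rank_rule Y F -> rank_rule Y' F' -> (forall x, F x < p) -> (forall x, F' x < p) ->
  chart_of p Y F = chart_of p Y' F' -> Y =1 Y' /\ F =1 F'.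
Proof.
move=> rule rule' lt lt' eq_chart.
have top_sub (Y1 Y2 : 'I_n -> 'I_k) (F1 F2 : CRidx n D.+1 -> nat) :
    rank_rule Y1 F1 -> rank_rule Y2 F2 -> (forall x, F1 x < p) ->
    chart_of p Y1 F1 = chart_of p Y2 F2 ->
    {subset codom (fun i => F1 (i, ord0)) <= codom (fun i => F2 (i, ord0))}.
  move=> rule1 rule2 lt1 eq12 _ /codomP [i ->].
  rewrite -[F1 _]/(val (Ordinal (lt1 (i, ord0)))) -(chart_of_rows rule2) -eq12.
  by rewrite (chart_of_rows rule1); apply/codomP; exists i.
have tops : (fun i => F (i, ord0)) =1 (fun i => F' (i, ord0)).
  apply: incr_ord_eq; [exact: rank_top_incr rule | exact: rank_top_incr rule' | move=> v].
  apply/idP/idP; first exact: (top_sub _ _ _ _ rule rule' lt eq_chart v).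
  exact: (top_sub _ _ _ _ rule' rule lt' (esym eq_chart) v).
have rows i : (Y i, rank_row F (Ordinal (lt (i, ord0))) i) = (Y' i, rank_row F' (Ordinal (lt (i, ord0))) i).
  apply: Some_inj; rewrite -(chart_of_top rule) // -(chart_of_top rule') ?eq_chart //.
  exact: esym (tops i).
split => [i | [i l]]; first by case: (rows i).
by case: (rows i) => _ /ffunP/(_ l)/(congr1 (@nat_of_ord p)); rewrite !rank_rowE.
Qed.

Lemma eq_chart_of n D k p (Y Y' : 'I_n -> 'I_k) (F F' : CRidx n D.+1 -> nat) :
  Y =1 Y' -> F =1 F' -> chart_of p Y F = chart_of p Y' F'.
Proof.
move=> eqY eqF; apply/ffunP => t; rewrite !ffunE (@eq_pick _ _ (fun i => F' (i, ord0) == t)).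
  by case: pickP => // i _; rewrite eqY; congr (Some (_, _)); apply/ffunP => l; rewrite !ffunE eqF.
by move=> i; rewrite eqF.
Qed.

Section RanksOfChart.
Variables n D k p : nat.
Local Notation d := D.+1.
Variable h : chart d k p.
Hypotheses (h_ok : chart_rule h) (h_rows : nrows h = n).

Let row_of (i : 'I_n) : 'I_p := enum_val (cast_ord (esym h_rows) i).

Let row_of_ltn i j : (row_of i < row_of j) = (i < j).
Proof. exact: enum_val_ltn. Qed.

Let row_of_row i : h (row_of i) != None.
Proof. by have := enum_valP (cast_ord (esym h_rows) i); rewrite inE. Qed.

Let row_of_onto t : h t != None -> exists i, row_of i = t.
Proof.
move=> ht; have t_row : t \in [set t | h t != None] by rewrite inE.
by exists (cast_ord h_rows (enum_rank_in t_row t)); rewrite /row_of cast_ordK enum_rankK_in.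
Qed.

Let color_pos (i : 'I_n) : 0 < k.
Proof. by case: (h (row_of i)) (row_of_row i) => [[c _] _|//]; apply: leq_ltn_trans (ltn_ord c). Qed.

Let row_at i : chart_row d k p := odflt (Ordinal (color_pos i), [ffun=> row_of i]) (h (row_of i)).

Let color_of := [ffun i => (row_at i).1].
Let ranks_of i := (row_at i).2.
Let rank_of (x : CRidx n d) : nat := ranks_of x.1 x.2.

Let h_row_at i : h (row_of i) = Some (color_of i, ranks_of i).
Proof. by rewrite /color_of /ranks_of ffunE -surjective_pairing /row_at; case: (h _) (row_of_row i). Qed.

Let rank_of_top i : rank_of (i, ord0) = row_of i.
Proof. by rewrite /rank_of /= (chart_top h_ok (h_row_at i)). Qed.

Let rank_of_rule : rank_rule color_of rank_of.
Proof.
have E := h_row_at.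
split.
- by move=> i i' lt_ii'; rewrite !rank_of_top row_of_ltn.
- by move=> i i' j /val_inj; apply: (chart_color h_ok (E i) (E i')).
- by move=> i j j'; apply: (chart_row_decr h_ok (E i)).
- by move=> i i' j j' /val_inj; apply: (chart_col h_ok (E i) (E i')).
- by move=> i i' j j' jS /val_inj eq_j'; rewrite /rank_of /= (chart_eq_succ h_ok (E i) (E i') jS eq_j').
Qed.

Let rank_of_lt x : rank_of x < p.
Proof. exact: ltn_ord. Qed.

Let rank_of_onto v : v < p -> exists x, rank_of x = v.
Proof.
move=> lt_vp; have [t [c [P [l [E Pl]]]]] := chart_cover h_ok (Ordinal lt_vp).
have [i eq_t] : exists i, row_of i = t by apply: row_of_onto; rewrite E.
exists (i, l); move: E; rewrite -eq_t h_row_at => -[_ P_eq].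
by rewrite /rank_of /= P_eq Pl.
Qed.

Let chart_of_rank_of : chart_of p color_of rank_of = h.
Proof.
apply/ffunP => t; case E: (h t) => [r|].
  have [i eq_t] : exists i, row_of i = t by apply: row_of_onto; rewrite E.
  rewrite -eq_t (chart_of_top rank_of_rule (rank_of_top i)) -E -eq_t h_row_at.
  congr (Some (_, _)).
  by apply/ffunP => l; apply: val_inj; rewrite /= (rank_rowE rank_of_lt).
case E': (chart_of _ _ _ t) => [r|] //; have [i top_i _] := chart_ofP E'.
move: E; have -> : t = row_of i by apply: val_inj; rewrite /= -rank_of_top top_i.
by rewrite h_row_at.
Qed.

Lemma chart_ranks : exists (Y : {ffun 'I_n -> 'I_k}) (F : CRidx n d -> nat),
  [/\ rank_rule Y F, forall x, F x < p,
  forall v, v < p -> exists x, F x = v & chart_of p Y F = h].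
Proof. by exists color_of, rank_of. Qed.

End RanksOfChart.

Definition chart_count n d k p := #|[set h : chart d k p | chart_ok h && (nrows h == n)]|.

Definition cr_of_ranks n d k (Y : {ffun 'I_n -> 'I_k}) (F : CRidx n d -> nat) : CRcand n d k :=
  (Y, [ffun xy => F xy.1 <= F xy.2]).

Lemma cr_of_ranksP n D k p (Y : {ffun 'I_n -> 'I_k}) (F : CRidx n D.+1 -> nat) :
    rank_rule Y F -> (forall x, F x < p) -> (forall v, v < p -> exists x, F x = v) ->
  [/\ is_CR (cr_of_ranks Y F), cr_size (cr_of_ranks Y F) = p & cr_rank (cr_of_ranks Y F) =1 F].
Proof.
move=> rule lt onto; have leF x y : cr_le (cr_of_ranks Y F) x y = (F x <= F y) by rewrite /cr_le ffunE.
have crc : is_CR (cr_of_ranks Y F) by apply/(is_CR_rank_rule leF).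
by have [] := rank_unique (CR_total crc) (CR_trans crc) leF lt onto.
Qed.

Lemma CR_ext n d k (c c' : CRcand n d k) :
  is_CR c -> is_CR c' -> c.1 = c'.1 -> cr_rank c =1 cr_rank c' -> c = c'.
Proof.
case: c c' => [Y R] [Y' R'] crc crc' /= eqY eq_rank; subst Y'; congr (_, _).
apply/ffunP => -[x y]; rewrite -[R _]/(cr_le (Y, R) x y) -[R' _]/(cr_le (Y, R') x y).
by rewrite (cr_le_rank crc) (cr_le_rank crc') !eq_rank.
Qed.

Lemma Pcount_charts n D k p : Pcount p n D.+1 k = chart_count n D.+1 k p.
Proof.
pose f (c : CRcand n D.+1 k) := chart_of p c.1 (cr_rank c).
rewrite /Pcount /chart_count -(@card_in_imset _ _ f); last first.
  move=> c c' /[!inE] /andP[crc /eqP size_c] /andP[crc' /eqP size_c'] /chart_of_inj.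
  have lt (c0 : CRcand n D.+1 k) : is_CR c0 -> cr_size c0 = p -> forall x, cr_rank c0 x < p.
    by move=> crc0 <- x; apply: cr_rank_lt.
  case/(_ (CR_rank_rule crc) (CR_rank_rule crc') (lt c crc size_c) (lt c' crc' size_c')).
  by move=> eqY eq_rank; apply: CR_ext => //; apply/ffunP.
apply: eq_card => h; rewrite inE; apply/imsetP/andP => [[c] | [/chartP h_ok /eqP h_rows]].
  rewrite inE => /andP[crc /eqP size_c] ->.
  have lt x : cr_rank c x < p by rewrite -size_c cr_rank_lt.
  have onto v : v < p -> exists x, cr_rank c x = v by rewrite -size_c; apply: cr_rank_onto.
  by split; [exact/chartP/(chart_of_rule (CR_rank_rule crc) lt onto) | exact/eqP/(nrows_chart_of (CR_rank_rule crc) lt)].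
have [Y [F [rule lt onto <-]]] := chart_ranks h_ok h_rows.
have [crc size_c rank_c] := cr_of_ranksP rule lt onto.
by exists (cr_of_ranks Y F); [rewrite inE crc size_c eqxx | apply: eq_chart_of].
Qed.

Lemma chart1_row k p (h : chart 1 k p) : chart_rule h -> forall t, exists c, h t = Some (c, [ffun=> t]).
Proof.
move=> h_ok u; have [t [c [P [l [E Pl]]]]] := chart_cover h_ok u.
have top := chart_top h_ok E (l := ord0) erefl; rewrite (ord1 l) top in Pl; subst u.
by exists c; rewrite E; congr (Some (_, _)); apply/ffunP => l'; rewrite ffunE (ord1 l').
Qed.

Definition chart1_of k p (Y : {ffun 'I_p -> 'I_k}) : chart 1 k p :=
  [ffun t => Some (Y t, [ffun=> t])].

Lemma chart1_of_rule k p (Y : {ffun 'I_p -> 'I_k}) : chart_rule (chart1_of Y).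
Proof.
split.
- by move=> t c P; rewrite ffunE => -[_ <-] l _; rewrite ffunE.
- by move=> t c P _ l l'; rewrite (ord1 l) (ord1 l').
- by move=> t c P t' c' P' _ _ l l'; rewrite (ord1 l) (ord1 l').
- by move=> t c P t' c' P'; rewrite !ffunE => -[<- <-] [<- <-] l; rewrite !ffunE => ->.
- by move=> t c P t' c' P' _ _ l l'; rewrite (ord1 l) (ord1 l').
- by move=> u; exists u, (Y u), [ffun=> u], ord0; rewrite !ffunE.
Qed.

Lemma chart_count1 n k p : chart_count n 1 k p = if n == p then k ^ n else 0.
Proof.
have nrows_p (h : chart 1 k p) : chart_ok h -> nrows h = p.
  move/chartP/chart1_row => rows; rewrite -[RHS]card_ord -cardsT /nrows.
  by apply: eq_card => t; rewrite !inE; have [c ->] := rows t.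
rewrite /chart_count; case: eqP => [-> | ne_np]; last first.
  apply: eq_card0 => h; rewrite inE.
  by apply/negP => /andP[/nrows_p -> /eqP]; apply: nesym.
have -> : [set h : chart 1 k p | chart_ok h && (nrows h == p)] = @chart1_of k p @: [set: {ffun 'I_p -> 'I_k}].
  apply/setP => h; rewrite inE; apply/andP/imsetP => [[/chartP/chart1_row rows _] | [Y _ ->]].
    have [Y hY] := fin_all_exists rows.
    by exists [ffun t => Y t] => //; apply/ffunP => t; rewrite !ffunE hY.
  have Y_ok : chart_ok (chart1_of Y) by apply/chartP/chart1_of_rule.
  by rewrite Y_ok nrows_p.
rewrite card_imset ?cardsT ?card_ffun ?card_ord // => Y Y' /ffunP eqY.
by apply/ffunP => t; have := eqY t; rewrite !ffunE => -[].
Qed.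

Section Shift.
Variables (m : nat) (A : {set 'I_m}).

Definition shift (a : 'I_#|A|) : 'I_m.+1 := lift ord0 (enum_val a).

Lemma shift_inj : injective shift.
Proof. by move=> a b /lift_inj /enum_val_inj. Qed.

Lemma shift_ltn a b : (shift a < shift b) = (a < b).
Proof. by rewrite !lift0 ltnS enum_val_ltn. Qed.

Lemma shift_neq0 a : shift a != ord0.
Proof. by apply/eqP => /(congr1 (@nat_of_ord _)); rewrite lift0. Qed.

Definition unshift (a0 : 'I_#|A|) (u : 'I_m.+1) : 'I_#|A| :=
  odflt a0 [pick a | shift a == u].

Lemma unshiftK a0 v : v \in A -> shift (unshift a0 (lift ord0 v)) = lift ord0 v.
Proof.
move=> vA; rewrite /unshift; case: pickP => [a /eqP // | /(_ (enum_rank_in vA v))].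
by rewrite /shift enum_rankK_in ?eqxx.
Qed.

End Shift.

Arguments shift {m A} a.

Lemma shift_disjoint m (A : {set 'I_m}) a (a' : 'I_#|~: A|) : @shift m A a != shift a'.
Proof.
rewrite /shift (inj_eq lift_inj); apply: contraTneq (enum_valP a) => ->.
by have := enum_valP a'; rewrite inE.
Qed.


Lemma shift_cases m (A : {set 'I_m}) (u : 'I_m.+1) :
  [\/ u = ord0, exists a, u = @shift m A a | exists a, u = @shift m (~: A) a].
Proof.
case: (unliftP ord0 u) => [v ->|->]; last by constructor 1.
have [vA | vNA] := boolP (v \in A).
  by constructor 2; exists (enum_rank_in vA v); rewrite /shift enum_rankK_in.
have vCA : v \in ~: A by rewrite inE.
by constructor 3; exists (enum_rank_in vCA v); rewrite /shift enum_rankK_in.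
Qed.

Lemma lift_max_val D (l : 'I_D) : lift ord_max l = l :> nat.
Proof. by rewrite /= /bump leqNgt ltn_ord. Qed.

Lemma max_lift n (l : 'I_n.+1) : l != ord_max -> exists l1, l = lift ord_max l1.
Proof. by case: (unliftP ord_max l) => [l1 -> _ | ->]; [exists l1 | rewrite eqxx]. Qed.

Section Glue.
Variables (D k p : nat) (T : {set 'I_p}).
Hypothesis D_gt0 : 0 < D.

Definition block_ranks (P1 : {ffun 'I_D -> 'I_#|T|}) : {ffun 'I_D.+1 -> 'I_p.+1} :=
  [ffun l => if unlift ord_max l is Some l1 then shift (P1 l1) else ord0].

Definition rest_ranks (P2 : {ffun 'I_D.+1 -> 'I_#|~: T|}) : {ffun 'I_D.+1 -> 'I_p.+1} :=
  [ffun l => shift (P2 l)].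

Definition glue (b : 'I_k) (h1 : chart D 1 #|T|) (h2 : chart D.+1 k #|~: T|) :
    chart D.+1 k p.+1 :=
  [ffun u => if [pick a | @shift p T a == u] is Some a then
               omap (fun r => (b, block_ranks r.2)) (h1 a)
             else if [pick a | @shift p (~: T) a == u] is Some a then
               omap (fun r => (r.1, rest_ranks r.2)) (h2 a)
             else None].

Lemma block_ranks_lift P1 l1 : block_ranks P1 (lift ord_max l1) = shift (P1 l1).
Proof. by rewrite ffunE liftK. Qed.

Lemma block_ranks_max P1 : block_ranks P1 ord_max = ord0.
Proof. by rewrite ffunE unlift_none. Qed.

Lemma block_ranks_neq_rest P1 P2 l l' : block_ranks P1 l != rest_ranks P2 l'.
Proof.
rewrite !ffunE; case: (unliftP ord_max l) => [l1 _ | _]; first exact: (shift_disjoint (P1 l1) (P2 l')).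
by rewrite eq_sym shift_neq0.
Qed.

Lemma block_ranks_inj : injective block_ranks.
Proof.
move=> P1 P1' /ffunP eqP1; apply/ffunP => l1.
by have := eqP1 (lift ord_max l1); rewrite !block_ranks_lift => /shift_inj.
Qed.

Lemma rest_ranks_inj : injective rest_ranks.
Proof. by move=> P2 P2' /ffunP eqP2; apply/ffunP => l; have := eqP2 l; rewrite !ffunE => /shift_inj. Qed.

Variables (b : 'I_k) (h1 : chart D 1 #|T|) (h2 : chart D.+1 k #|~: T|).

Lemma glue0 : glue b h1 h2 ord0 = None.
Proof.
rewrite ffunE; case: pickP => [a /eqP shift0 | _]; first by have := shift_neq0 a; rewrite shift0.
by case: pickP => [a /eqP shift0 | _] //; have := shift_neq0 a; rewrite shift0.
Qed.

Lemma glue_block a : glue b h1 h2 (shift a) = omap (fun r => (b, block_ranks r.2)) (h1 a).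
Proof. by rewrite ffunE; case: pickP => [a' /eqP/shift_inj -> // | /(_ a)]; rewrite eqxx. Qed.

Lemma glue_rest a : glue b h1 h2 (shift a) = omap (fun r => (r.1, rest_ranks r.2)) (h2 a).
Proof.
rewrite ffunE; case: pickP => [a' /eqP shift_a | _].
  by have := shift_disjoint a' a; rewrite shift_a eqxx.
by case: pickP => [a' /eqP/shift_inj -> // | /(_ a)]; rewrite eqxx.
Qed.

Lemma glue_row u c P : glue b h1 h2 u = Some (c, P) ->
  (exists a c1 P1, [/\ u = shift a, h1 a = Some (c1, P1), c = b & P = block_ranks P1]) \/
  (exists a P2, [/\ u = shift a, h2 a = Some (c, P2) & P = rest_ranks P2]).
Proof.
case: (shift_cases T u) => [-> | [a ->] | [a ->]]; first by rewrite glue0.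
  by rewrite glue_block; case E: (h1 a) => [[c1 P1]|] //= [<- <-]; left; exists a, c1, P1.
by rewrite glue_rest; case E: (h2 a) => [[c2 P2]|] //= [<- <-]; right; exists a, P2.
Qed.

Hypotheses (h1_ok : chart_rule h1) (h2_ok : chart_rule h2).

Let max_lift (l : 'I_D.+1) : l != ord_max -> exists l1, l = lift ord_max l1.
Proof. by case: (unliftP ord_max l) => [l1 -> | ->]; [exists l1 | rewrite eqxx]. Qed.

Lemma glue_top u c P : glue b h1 h2 u = Some (c, P) -> forall l : 'I_D.+1, l = 0 :> nat -> P l = u.
Proof.
case/glue_row => [[a [c1 [P1 [-> E _ ->]]]] | [a [P2 [-> E ->]]]] l l0.
  have -> : l = lift ord_max (Ordinal D_gt0) by apply: val_inj; rewrite /= l0 /bump leqNgt D_gt0.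
  by rewrite block_ranks_lift (chart_top h1_ok E).
by rewrite ffunE (chart_top h2_ok E).
Qed.

Lemma glue_row_decr u c P : glue b h1 h2 u = Some (c, P) ->
  forall l l' : 'I_D.+1, l' < l -> P l < P l'.
Proof.
case/glue_row => [[a [c1 [P1 [_ E _ ->]]]] | [a [P2 [_ E ->]]]] l l' lt_l; last first.
  by rewrite !ffunE shift_ltn (chart_row_decr h2_ok E).
have [l1' def_l'] : exists l1', l' = lift ord_max l1'.
  by apply: max_lift; apply: contraTneq lt_l => ->; rewrite -leqNgt -ltnS.
rewrite def_l' block_ranks_lift; have [-> | /max_lift [l1 def_l]] := eqVneq l ord_max.
  by rewrite block_ranks_max /shift lift0.
rewrite def_l block_ranks_lift shift_ltn (chart_row_decr h1_ok E) //.
by move: lt_l; rewrite def_l def_l' !lift_max_val.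
Qed.

Lemma glue_same_kind u c P u' c' P' :
    glue b h1 h2 u = Some (c, P) -> glue b h1 h2 u' = Some (c', P') ->
    forall l l', P l = P' l' ->
  (exists a c1 P1 a' c1' P1', [/\ h1 a = Some (c1, P1), h1 a' = Some (c1', P1'),
     c = b /\ c' = b, P = block_ranks P1 & P' = block_ranks P1']) \/
  (exists a P2 a' P2', [/\ h2 a = Some (c, P2), h2 a' = Some (c', P2'),
     P = rest_ranks P2 & P' = rest_ranks P2']).
Proof.
case/glue_row => [[a [c1 [P1 [_ E -> ->]]]] | [a [P2 [_ E ->]]]];
case/glue_row => [[a' [c1' [P1' [_ E' -> ->]]]] | [a' [P2' [_ E' ->]]]] l l' /eqP eq_rank.
- by left; exists a, c1, P1, a', c1', P1'.
- by move: eq_rank; rewrite (negbTE (block_ranks_neq_rest _ _ _ _)).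
- by move: eq_rank; rewrite eq_sym (negbTE (block_ranks_neq_rest _ _ _ _)).
- by right; exists a, P2, a', P2'.
Qed.

Lemma glue_col u c P u' c' P' : glue b h1 h2 u = Some (c, P) -> glue b h1 h2 u' = Some (c', P') ->
  forall l l', P l = P' l' -> l = l'.
Proof.
move=> E E' l l' eq_rank.
case: (glue_same_kind E E' eq_rank) => [[a [c1 [P1 [a' [c1' [P1' [E1 E1' _ eqP1 eqP1']]]]]]] | ].
  move: eq_rank; rewrite eqP1 eqP1' !ffunE.
  case: (unliftP ord_max l) => [l1 ->| ->]; case: (unliftP ord_max l') => [l1' -> | -> //].
  - by move/shift_inj/(chart_col h1_ok E1 E1') ->.
  - by move/(congr1 (@nat_of_ord _)); rewrite lift0.
case=> a [P2 [a' [P2' [E2 E2' eqP2 eqP2']]]].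
by move: eq_rank; rewrite eqP2 eqP2' !ffunE => /shift_inj/(chart_col h2_ok E2 E2').
Qed.

Lemma glue_color u c P u' c' P' : glue b h1 h2 u = Some (c, P) -> glue b h1 h2 u' = Some (c', P') ->
  forall l, P l = P' l -> c = c'.
Proof.
move=> E E' l eq_rank.
case: (glue_same_kind E E' eq_rank) => [[a [c1 [P1 [a' [c1' [P1' [_ _ [-> ->] _ _]]]]]]] // | ].
case=> a [P2 [a' [P2' [E2 E2' eqP2 eqP2']]]].
by move: eq_rank; rewrite eqP2 eqP2' !ffunE => /shift_inj/(chart_color h2_ok E2 E2').
Qed.

Lemma glue_eq_succ u c P u' c' P' : glue b h1 h2 u = Some (c, P) -> glue b h1 h2 u' = Some (c', P') ->
  forall l l' : 'I_D.+1, l = l'.+1 :> nat -> P l' = P' l' -> P l = P' l.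
Proof.
move=> E E' l l' lS eq_rank.
case: (glue_same_kind E E' eq_rank) => [[a [c1 [P1 [a' [c1' [P1' [E1 E1' _ eqP1 eqP1']]]]]]] | ]; last first.
  case=> a [P2 [a' [P2' [E2 E2' eqP2 eqP2']]]].
  move: eq_rank; rewrite eqP2 eqP2' !ffunE => /shift_inj eq_l'.
  by rewrite (chart_eq_succ h2_ok E2 E2' lS eq_l').
have [l1' def_l'] : exists l1', l' = lift ord_max l1'.
  by apply: max_lift; apply/eqP => l'_max; move: (ltn_ord l); rewrite lS l'_max ltnn.
move: eq_rank; rewrite eqP1 eqP1' def_l' !block_ranks_lift => /shift_inj eq_l1'.
have [-> | /max_lift [l1 def_l]] := eqVneq l ord_max; first by rewrite !block_ranks_max.
rewrite def_l !block_ranks_lift (chart_eq_succ h1_ok E1 E1' _ eq_l1') //.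
by move: lS; rewrite def_l def_l' !lift_max_val.
Qed.

Lemma glue_cover : 0 < nrows h1 -> forall u, exists t c P l, glue b h1 h2 t = Some (c, P) /\ P l = u.
Proof.
move=> h1_rows u; case: (shift_cases T u) => [-> | [a ->] | [a ->]].
- move: h1_rows; rewrite card_gt0 => /set0Pn [a]; rewrite inE.
  case E: (h1 a) => [[c1 P1]|] // _.
  exists (shift a), b, (block_ranks P1), ord_max.
  by rewrite glue_block E block_ranks_max.
- have [t [c1 [P1 [l1 [E P1l1]]]]] := chart_cover h1_ok a.
  exists (shift t), b, (block_ranks P1), (lift ord_max l1).
  by rewrite glue_block E block_ranks_lift P1l1.
- have [t [c [P2 [l [E P2l]]]]] := chart_cover h2_ok a.
  exists (shift t), c, (rest_ranks P2), l.
  by rewrite glue_rest E ffunE P2l.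
Qed.

Lemma glue_rule : 0 < nrows h1 -> chart_rule (glue b h1 h2).
Proof.
move=> h1_rows; split; [exact: glue_top | exact: glue_row_decr | exact: glue_col |
  exact: glue_color | exact: glue_eq_succ | exact: glue_cover].
Qed.

End Glue.

Definition block_set D k p (h : chart D.+1 k p.+1) : {set 'I_p} :=
  [set v | [exists t, exists c, exists P, exists l,
     [&& h t == Some (c, P), P ord_max == ord0 & P l == lift ord0 v]]].

Lemma block_setP D k p (h : chart D.+1 k p.+1) v :
  reflect (exists t c P l, [/\ h t = Some (c, P), P ord_max = ord0 & P l = lift ord0 v])
          (v \in block_set h).
Proof.
rewrite inE; apply: (iffP existsP) => [[t /existsP[c /existsP[P /existsP[l]]]] | [t [c [P [l []]]]]].
  by case/and3P => /eqP E /eqP Pmax /eqP Pl; exists t, c, P, l.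
move=> E Pmax Pl; exists t; apply/existsP; exists c; apply/existsP; exists P.
by apply/existsP; exists l; rewrite E Pmax Pl !eqxx.
Qed.

Section GlueCount.
Variables (D k p : nat) (T : {set 'I_p}).
Hypothesis D_gt0 : 0 < D.
Variables (b : 'I_k) (h1 : chart D 1 #|T|) (h2 : chart D.+1 k #|~: T|).

Lemma glue_block_set : chart_rule h1 -> block_set (glue b h1 h2) = T.
Proof.
move=> h1_ok; apply/setP => v; apply/block_setP/idP => [[t [c [P [l [E Pmax Pl]]]]] | vT].
  case/glue_row: E Pmax Pl => [[a [c1 [P1 [_ _ _ ->]]]] | [a [P2 [_ _ ->]]]]; last first.
    by rewrite ffunE => /eqP; rewrite (negbTE (shift_neq0 _)).
  move=> _; rewrite ffunE; case: (unliftP ord_max l) => [l1 _ /lift_inj <- | _ /eqP]; last first.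
    by rewrite eq_sym lift_eqF.
  exact: enum_valP.
have [t [c1 [P1 [l1 [E P1l1]]]]] := chart_cover h1_ok (enum_rank_in vT v).
exists (shift t), b, (block_ranks P1), (lift ord_max l1).
by rewrite glue_block E block_ranks_max block_ranks_lift P1l1 /shift enum_rankK_in.
Qed.

Lemma glue_nrows : nrows (glue b h1 h2) = nrows h1 + nrows h2.
Proof.
set R1 := [set a | h1 a != None]; set R2 := [set a | h2 a != None].
have disj : [disjoint shift @: R1 & shift @: R2].
  by apply/pred0P => u /=; apply/andP => -[/imsetP[a _ ->] /imsetP[a' _ /eqP]]; rewrite (negbTE (shift_disjoint _ _)).
rewrite /nrows -(card_imset R1 (@shift_inj _ T)) -(card_imset R2 (@shift_inj _ (~: T))).
rewrite -cardsUI (disjoint_setI0 disj) cards0 addn0; apply: eq_card => u; rewrite !inE.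
case: (shift_cases T u) => [-> | [a ->] | [a ->]].
- rewrite glue0 eqxx /=; symmetry; apply/negbTE; rewrite negb_or.
  by apply/andP; split; apply/imsetP => -[a _ /eqP]; rewrite eq_sym (negbTE (shift_neq0 _)).
- rewrite glue_block (mem_imset _ _ (@shift_inj _ _)) inE.
  have -> : (shift a \in shift @: R2) = false.
    by apply/negbTE/imsetP => -[a' _ /eqP]; rewrite (negbTE (shift_disjoint _ _)).
  by rewrite orbF; case: (h1 a).
- rewrite glue_rest (mem_imset _ _ (@shift_inj _ _)) inE.
  have -> : (shift a \in shift @: R1) = false.
    by apply/negbTE/imsetP => -[a' _ /eqP]; rewrite eq_sym (negbTE (shift_disjoint _ _)).
  by case: (h2 a).
Qed.

End GlueCount.

Lemma glue_inj D k p (T : {set 'I_p}) b b' (h1 h1' : chart D 1 #|T|) (h2 h2' : chart D.+1 k #|~: T|) :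
  0 < nrows h1 -> glue b h1 h2 = glue b' h1' h2' -> (b, (h1, h2)) = (b', (h1', h2')).
Proof.
move=> h1_rows /ffunP eq_glue.
have eq1 : h1 = h1'.
  apply/ffunP => a; have := eq_glue (shift a); rewrite !glue_block.
  case: (h1 a) => [[c1 P1]|]; case: (h1' a) => [[c1' P1']|] //= [_ /block_ranks_inj ->].
  by rewrite (ord1 c1) (ord1 c1').
have eq2 : h2 = h2'.
  apply/ffunP => a; have := eq_glue (shift a); rewrite !glue_rest.
  by case: (h2 a) => [[c2 P2]|]; case: (h2' a) => [[c2' P2']|] //= [-> /rest_ranks_inj ->].
move: h1_rows; rewrite card_gt0 => /set0Pn [a]; rewrite inE.
have := eq_glue (shift a); rewrite !glue_block -eq1 eq2.
by case: (h1 a) => [[c1 P1]|] //= [->].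
Qed.

Section Split.
Variables (D k p : nat) (h : chart D.+1 k p.+1).
Hypotheses (D_gt0 : 0 < D) (h_ok : chart_rule h).
Local Notation T := (block_set h).

Lemma max_ltn_ranks t c P (l : 'I_D.+1) : h t = Some (c, P) -> l != ord_max -> P ord_max < P l.
Proof.
move=> E l_max; apply: (chart_row_decr h_ok E).
by have [l1 ->] := max_lift l_max; rewrite lift_max_val; apply: ltn_ord.
Qed.

Lemma no_row0 : h ord0 = None.
Proof.
case E: (h ord0) => [[c P]|] //.
have := max_ltn_ranks (l := ord0) E; rewrite (chart_top h_ok E (l := ord0)) //.
by rewrite -(inj_eq val_inj) /= eq_sym -lt0n D_gt0 => /(_ isT).
Qed.

Lemma block_ranks_in t c P l : h t = Some (c, P) -> P ord_max = ord0 -> l != ord_max ->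
  exists2 v, v \in T & P l = lift ord0 v.
Proof.
move=> E Pmax l_max; have := max_ltn_ranks E l_max.
rewrite Pmax; case: (unliftP ord0 (P l)) => [v Pl _ | ->]; last by rewrite ltnn.
by exists v => //; apply/block_setP; exists t, c, P, l.
Qed.

Lemma rest_ranks_notin t c P l : h t = Some (c, P) -> P ord_max != ord0 ->
  exists2 v, v \notin T & P l = lift ord0 v.
Proof.
move=> E Pmax; case: (unliftP ord0 (P l)) => [v Pl | Pl]; last first.
  have [l_max | /(max_ltn_ranks E)] := eqVneq l ord_max; first by rewrite -l_max Pl eqxx in Pmax.
  by rewrite Pl ltn0.
exists v => //; apply/block_setP => -[t' [c' [P' [l' [E' P'max P'l']]]]].
have eq_l : l' = l by apply: (chart_col h_ok E' E); rewrite P'l' Pl.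
rewrite eq_l in P'l'.
have := chart_eq_up h_ok E E' (l := ord_max) (leq_ord l) (etrans Pl (esym P'l')).
by move: Pmax; rewrite P'max => /eqP.
Qed.

Lemma block_row_max (a : 'I_#|T|) c P : h (shift a) = Some (c, P) -> P ord_max = ord0.
Proof.
move=> E; apply/eqP/negPn/negP => /(rest_ranks_notin ord0 E) [v vNT].
rewrite (chart_top h_ok E) // => /lift_inj def_v.
by move: vNT; rewrite -def_v enum_valP.
Qed.

Lemma rest_row_max (a : 'I_#|~: T|) c P : h (shift a) = Some (c, P) -> P ord_max != ord0.
Proof.
move=> E; apply/negP => /eqP Pmax.
have [|v vT] := block_ranks_in (l := ord0) E Pmax; first by rewrite -(inj_eq val_inj) /= eq_sym -lt0n.
rewrite (chart_top h_ok E) // => /lift_inj def_v.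
by have := enum_valP a; rewrite def_v inE vT.
Qed.

Lemma split_row t c P : h t = Some (c, P) ->
  (exists a : 'I_#|T|, t = shift a) /\ P ord_max = ord0 \/
  (exists a : 'I_#|~: T|, t = shift a) /\ P ord_max != ord0.
Proof.
case: (shift_cases T t) => [-> | [a ->] | [a ->]] E; first by rewrite no_row0 in E.
  by left; split; [exists a | exact: block_row_max E].
by right; split; [exists a | exact: rest_row_max E].
Qed.

Definition block_chart : chart D 1 #|T| :=
  [ffun a => omap (fun r : chart_row D.+1 k p.+1 =>
     (ord0, [ffun l1 => unshift a (r.2 (lift ord_max l1))])) (h (shift a))].

Definition rest_chart : chart D.+1 k #|~: T| :=
  [ffun a => omap (fun r : chart_row D.+1 k p.+1 =>
     (r.1, [ffun l => unshift a (r.2 l)])) (h (shift a))].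

Lemma block_chartE a c P : h (shift a) = Some (c, P) ->
  exists2 Q, block_chart a = Some (ord0, Q) & block_ranks Q = P.
Proof.
move=> E; rewrite ffunE E /=; eexists; first by [].
apply/ffunP => l; rewrite ffunE; case: (unliftP ord_max l) => [l1 -> | ->].
  have [|v vT Pl] := block_ranks_in (l := lift ord_max l1) E (block_row_max E).
    by rewrite eq_sym neq_lift.
  by rewrite ffunE Pl unshiftK.
by rewrite (block_row_max E).
Qed.

Lemma rest_chartE a c P : h (shift a) = Some (c, P) ->
  exists2 Q, rest_chart a = Some (c, Q) & rest_ranks Q = P.
Proof.
move=> E; rewrite ffunE E /=; eexists; first by [].
apply/ffunP => l; rewrite !ffunE.
have [v vNT Pl] := rest_ranks_notin l E (rest_row_max E).
by rewrite Pl unshiftK // inE.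
Qed.

Lemma block_chartP a c1 Q : block_chart a = Some (c1, Q) ->
  exists c P, h (shift a) = Some (c, P) /\ block_ranks Q = P.
Proof.
case E: (h (shift a)) => [[c P]|]; last by rewrite ffunE E.
have [Q' -> <-] := block_chartE E; case=> _ ->.
by exists c, (block_ranks Q).
Qed.

Lemma rest_chartP a c Q : rest_chart a = Some (c, Q) ->
  exists P, h (shift a) = Some (c, P) /\ rest_ranks Q = P.
Proof.
case E: (h (shift a)) => [[c' P]|]; last by rewrite ffunE E.
have [Q' -> <-] := rest_chartE E; case=> -> ->.
by exists (rest_ranks Q).
Qed.

Lemma block_chart_rule : chart_rule block_chart.
Proof.
split.
- move=> a c1 Q /block_chartP [c [P [E defP]]] l1 l1_0; apply: shift_inj.
  by rewrite -block_ranks_lift defP (chart_top h_ok E) // lift_max_val.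
- move=> a c1 Q /block_chartP [c [P [E defP]]] l1 l1' lt_l1.
  by rewrite -shift_ltn -!block_ranks_lift defP (chart_row_decr h_ok E) // !lift_max_val.
- move=> a c1 Q a' c1' Q' /block_chartP [c [P [E defP]]] /block_chartP [c' [P' [E' defP']]] l1 l1' eqQ.
  apply: (@lift_inj _ ord_max); apply: (chart_col h_ok E E').
  by rewrite -defP -defP' !block_ranks_lift eqQ.
- by move=> a c1 Q a' c1' Q' _ _ _ _; rewrite (ord1 c1) (ord1 c1').
- move=> a c1 Q a' c1' Q' /block_chartP [c [P [E defP]]] /block_chartP [c' [P' [E' defP']]] l1 l1' l1S eqQ.
  apply: shift_inj; rewrite -!block_ranks_lift defP defP'.
  apply: (chart_eq_succ h_ok E E' (l' := lift ord_max l1')); first by rewrite !lift_max_val.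
  by rewrite -defP -defP' !block_ranks_lift eqQ.
- move=> a0; have /block_setP [t [c [P [l [E Pmax Pl]]]]] := enum_valP a0.
  have [[[a def_t] _] | [_ /negP]] := split_row E; last by rewrite Pmax.
  rewrite def_t in E; have [Q EQ defP] := block_chartE E.
  have [l1 def_l] : exists l1, l = lift ord_max l1.
    by apply: max_lift; apply/eqP => l_max; move: Pl; rewrite l_max Pmax => /eqP; rewrite eq_sym lift_eqF.
  exists a, ord0, Q, l1; split=> //; apply: shift_inj.
  by rewrite -block_ranks_lift defP -def_l Pl.
Qed.

Lemma rest_chart_rule : chart_rule rest_chart.
Proof.
have rest_ranksE (Q : {ffun 'I_D.+1 -> 'I_#|~: T|}) l : shift (Q l) = rest_ranks Q l.
  by rewrite ffunE.
split.
- move=> a c Q /rest_chartP [P [E defP]] l l0; apply: shift_inj.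
  by rewrite rest_ranksE defP (chart_top h_ok E l0).
- move=> a c Q /rest_chartP [P [E defP]] l l' lt_l.
  by rewrite -shift_ltn !rest_ranksE defP (chart_row_decr h_ok E).
- move=> a c Q a' c' Q' /rest_chartP [P [E defP]] /rest_chartP [P' [E' defP']] l l' eqQ.
  by apply: (chart_col h_ok E E'); rewrite -defP -defP' !ffunE eqQ.
- move=> a c Q a' c' Q' /rest_chartP [P [E defP]] /rest_chartP [P' [E' defP']] l eqQ.
  by apply: (chart_color h_ok E E' (l := l)); rewrite -defP -defP' !ffunE eqQ.
- move=> a c Q a' c' Q' /rest_chartP [P [E defP]] /rest_chartP [P' [E' defP']] l l' lS eqQ.
  apply: shift_inj; rewrite !rest_ranksE defP defP' (chart_eq_succ h_ok E E' lS) //.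
  by rewrite -defP -defP' !ffunE eqQ.
- move=> a0; have [t [c [P [l [E Pl]]]]] := chart_cover h_ok (shift a0).
  have [[_ Pmax] | [[a def_t] _]] := split_row E.
    have [l_max | /(block_ranks_in E Pmax) [v vT]] := eqVneq l ord_max.
      by move: Pl; rewrite l_max Pmax => /eqP; rewrite eq_sym (negbTE (shift_neq0 _)).
    rewrite Pl => /lift_inj def_v; have := enum_valP a0.
    by rewrite def_v inE vT.
  rewrite def_t in E; have [Q EQ defP] := rest_chartE E.
  exists a, c, Q, l; split=> //; apply: shift_inj.
  by rewrite rest_ranksE defP Pl.
Qed.

Lemma block_row_exists : exists t c P, h t = Some (c, P) /\ P ord_max = ord0.
Proof.
have [t [c [P [l [E Pl]]]]] := chart_cover h_ok ord0.
exists t, c, P; split=> //; have [l_max | /(max_ltn_ranks E)] := eqVneq l ord_max.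
  by rewrite -l_max.
by rewrite Pl ltn0.
Qed.

Lemma block_chart_nonempty : 0 < nrows block_chart.
Proof.
have [t [c [P [E Pmax]]]] := block_row_exists.
have [[[a def_t] _] | [_ /negP]] := split_row E; last by rewrite Pmax.
rewrite def_t in E; have [Q EQ _] := block_chartE E.
by rewrite card_gt0; apply/set0Pn; exists a; rewrite inE EQ.
Qed.

Lemma glue_split : exists b, glue b block_chart rest_chart = h.
Proof.
have [t0 [b [P0 [E0 P0max]]]] := block_row_exists.
exists b; apply/ffunP => u; case: (shift_cases T u) => [-> | [a ->] | [a ->]].
- by rewrite glue0 no_row0.
- rewrite glue_block; case E: (h (shift a)) => [[c P]|]; last by rewrite ffunE E.
  have [Q -> defP] := block_chartE E; rewrite /= defP.
  by rewrite (chart_color h_ok E0 E (l := ord_max)) // P0max (block_row_max E).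
- rewrite glue_rest; case E: (h (shift a)) => [[c P]|]; last by rewrite ffunE E.
  by have [Q -> defP] := rest_chartE E; rewrite /= defP.
Qed.

End Split.

Lemma card_pairs_sum (A B : finType) (P1 : pred A) (P2 : pred B) (f : A -> nat) (g : B -> nat) n :
  #|[set y : A * B | [&& P1 y.1, P2 y.2, 0 < f y.1 & f y.1 + g y.2 == n]]| =
  \sum_(1 <= j < n.+1) #|[set a | P1 a && (f a == j)]| * #|[set b | P2 b && (g b == n - j)]|.
Proof.
rewrite -sum1dep_card.
transitivity (\sum_(y | [&& P1 y.1, P2 y.2, 0 < f y.1 & f y.1 + g y.2 == n])
                \sum_(1 <= j < n.+1 | j == f y.1) 1).
  apply: eq_bigr => y /and4P[_ _ pos /eqP sum_n].
  by rewrite big_nat1_eq ifT // pos ltnS -sum_n leq_addr.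
rewrite (exchange_big_dep xpredT) //=; apply: eq_big_nat => j /andP[j_pos j_le].
rewrite -cardsX sum1dep_card; apply: eq_card => -[a b]; rewrite !inE /=.
apply/andP/and3P => [[/and4P[pa pb pos /eqP sum_n] /eqP ->] | [/andP[pa /eqP fa] pb /eqP gb]].
  by rewrite pa pb eqxx -sum_n addKn.
by rewrite /= pa pb fa gb j_pos subnKC // !eqxx.
Qed.

Lemma card_block_fiber D k p (T : {set 'I_p}) n : 0 < D ->
  #|[set h : chart D.+1 k p.+1 | [&& chart_ok h, block_set h == T & nrows h == n]]| =
  k * \sum_(1 <= j < n.+1) chart_count j D 1 #|T| * chart_count (n - j) D.+1 k #|~: T|.
Proof.
move=> D_gt0.
pose pieces := [set y : chart D 1 #|T| * chart D.+1 k #|~: T| |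
  [&& chart_ok y.1, chart_ok y.2, 0 < nrows y.1 & nrows y.1 + nrows y.2 == n]].
have -> : [set h : chart D.+1 k p.+1 | [&& chart_ok h, block_set h == T & nrows h == n]] =
    (fun x => glue x.1 x.2.1 x.2.2) @: setX [set: 'I_k] pieces.
  apply/setP => h; rewrite inE; apply/and3P/imsetP => [[/chartP h_ok /eqP eqT /eqP h_rows] | ].
    subst T; have [b glue_h] := glue_split D_gt0 h_ok.
    exists (b, (block_chart h, rest_chart h)); last by rewrite /= glue_h.
    rewrite !inE /= (block_chart_nonempty D_gt0 h_ok).
    rewrite -glue_h glue_nrows in h_rows.
    have ok1 : chart_ok (block_chart h) by apply/chartP/block_chart_rule.
    have ok2 : chart_ok (rest_chart h) by apply/chartP/rest_chart_rule.
    by rewrite ok1 ok2 h_rows eqxx.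
  case=> -[b [h1 h2]]; rewrite !inE /= => /and4P[/chartP h1_ok /chartP h2_ok h1_rows /eqP rows] ->.
  by rewrite glue_nrows rows glue_block_set // eqxx; split=> //; apply/chartP/glue_rule.
rewrite card_in_imset; last first.
  by move=> [b [h1 h2]] [b' [h1' h2']]; rewrite !inE /= => /and4P[_ _ h1_rows _] _; apply: glue_inj.
by rewrite cardsX cardsT card_ord card_pairs_sum.
Qed.

Lemma chart_count_rec D k p n : 0 < D ->
  chart_count n D.+1 k p.+1 = \sum_(i < p.+1) 'C(p, i) *
    (k * \sum_(1 <= j < n.+1) chart_count j D 1 i * chart_count (n - j) D.+1 k (p - i)).
Proof.
move=> D_gt0.
have -> : chart_count n D.+1 k p.+1 = \sum_(T : {set 'I_p})
    #|[set h : chart D.+1 k p.+1 | [&& chart_ok h, block_set h == T & nrows h == n]]|.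
  rewrite /chart_count -sum1dep_card (partition_big (@block_set D k p) predT) //=.
  apply: eq_bigr => T _; rewrite -sum1dep_card; apply: eq_bigl => h.
  by rewrite -andbA; congr (_ && _); rewrite andbC.
have card_lt (T : {set 'I_p}) : #|T| < p.+1 by rewrite ltnS -[p in _ <= p]card_ord max_card.
rewrite (partition_big (fun T => Ordinal (card_lt T)) predT) //=; apply: eq_bigr => i _.
rewrite -[p in 'C(p, _)]card_ord -card_draws -sum_nat_cond_const; apply: eq_big => [T | T /eqP/(congr1 val)/= card_T].
  by rewrite -val_eqE.
by rewrite card_block_fiber // (cardsCs (~: T)) setCK card_ord card_T.
Qed.

Lemma cr_size_empty n d k (c : CRcand n d k) : n = 0 \/ d = 0 -> cr_size c = 0.
Proof.
move=> nd; apply: eq_card0 => s; apply/imsetP => -[[i l] _ _].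
by case: nd => nd; subst; [case: i | case: l].
Qed.

Lemma is_CR_rows0 d k (c : CRcand 0 d k) : is_CR c.
Proof.
have no_idx (P : pred (CRidx 0 d)) : [forall x, P x] by apply/forallP => -[[]].
have no_row (P : pred 'I_0) : [forall i, P i] by apply/forallP => -[].
rewrite /is_CR /total_preorder /cr_cond1 /cr_cond2 /cr_cond3 /cr_cond4 /cr_cond5 !no_idx !no_row.
by case: ifP.
Qed.

Lemma is_CR_cols0 n k (c : CRcand n 0 k) :
  is_CR c = [forall i : 'I_n, forall i' : 'I_n, (i < i') ==> (c.1 i < c.1 i')].
Proof.
have no_col (P : pred 'I_0) : [forall j, P j] by apply/forallP => -[].
have no_idx (P : pred (CRidx n 0)) : [forall x, P x] by apply/forallP => -[i []].
rewrite /is_CR.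
have -> : total_preorder c by rewrite /total_preorder !no_idx.
have -> : cr_cond2 c by apply/forallP => i; apply/forallP => i'; exact: no_col.
have -> : cr_cond3 c by apply/forallP => i; exact: no_col.
have -> : cr_cond4 c by apply/forallP => i; apply/forallP => i'; exact: no_col.
have -> : cr_cond5 c by apply/forallP => i; apply/forallP => i'; exact: no_col.
by rewrite !andbT.
Qed.

Lemma card_incr_ffun n k :
  #|[set Y : {ffun 'I_n -> 'I_k} | [forall i : 'I_n, forall i' : 'I_n, (i < i') ==> (Y i < Y i')]]| =
  'C(k, n).
Proof.
rewrite -card_ltn_sorted_tuples.
pose of_tuple (t : n.-tuple 'I_k) : {ffun 'I_n -> 'I_k} := [ffun i => tnth t i].
have of_tuple_inj : injective of_tuple.
  by move=> t t' /ffunP eq_t; apply: eq_from_tnth => i; have := eq_t i; rewrite !ffunE.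
rewrite -(card_imset _ of_tuple_inj); apply: eq_card => Y; rewrite inE.
apply/forallP/imsetP => [incr | [t]].
  exists [tuple Y i | i < n]; last by apply/ffunP => i; rewrite ffunE tnth_mktuple.
  rewrite inE -map_comp; apply: sorted_map_enum_ord => i i' lt_ii'.
  by move/forallP: (incr i) => /(_ i') /implyP; apply.
rewrite inE => sorted_t -> i; apply/forallP => i'; apply/implyP => lt_ii'.
pose x0 := tnth t i; rewrite !ffunE (tnth_nth x0 t i) (tnth_nth x0 t i').
have := sorted_ltn_nth ltn_trans 0 sorted_t i i'.
by rewrite !inE size_map size_tuple !ltn_ord !(nth_map x0) ?size_tuple //; apply.
Qed.

Lemma Pcount_rows0 p d k : Pcount p 0 d k = (p == 0).
Proof.
rewrite /Pcount; case: eqP => [-> | p_neq0].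
  have -> : [set c : CRcand 0 d k | is_CR c && (cr_size c == 0)] = setT.
    by apply/setP => c; rewrite !inE is_CR_rows0 cr_size_empty //; left.
  by rewrite cardsT /CRcand card_prod !card_ffun /CRidx !card_prod !card_ord.
apply: eq_card0 => c; rewrite inE cr_size_empty; last by left.
by rewrite eq_sym (introF eqP p_neq0) andbF.
Qed.

Lemma Pcount_cols0 p n k : Pcount p n 0 k = (p == 0) * 'C(k, n).
Proof.
rewrite /Pcount; case: eqP => [-> | p_neq0]; last first.
  apply: eq_card0 => c; rewrite inE cr_size_empty; last by right.
  by rewrite eq_sym (introF eqP p_neq0) andbF.
have -> : [set c : CRcand n 0 k | is_CR c && (cr_size c == 0)] =
    setX [set Y : {ffun 'I_n -> 'I_k} | [forall i : 'I_n, forall i' : 'I_n, (i < i') ==> (Y i < Y i')]] setT.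
  by apply/setP => -[Y R]; rewrite !inE is_CR_cols0 cr_size_empty ?eqxx ?andbT //; right.
by rewrite cardsX card_incr_ffun cardsT card_ffun /CRidx !card_prod !card_ord !muln0 expn0 muln1 mul1n.
Qed.

Lemma chart_count_ranks0 n d k : 0 < n -> chart_count n d k 0 = 0.
Proof.
move=> n_gt0; apply: eq_card0 => h; rewrite inE; apply/negP => /andP[_ /eqP rows_h].
by have := max_card [set t | h t != None]; rewrite card_ord -/(nrows h) rows_h leqNgt n_gt0.
Qed.

Theorem lemma9p1 (n d k p : nat) :
  (d = 0 -> k < n -> Pcount p n d k = 0) /\
  (n = 0 -> p = 0 -> Pcount p n d k = 1) /\
  (n = 0 -> 1 <= p -> Pcount p n d k = 0) /\
  (d = 0 -> 1 <= n <= k -> p = 0 -> Pcount p n d k = 'C(k, n)) /\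
  (d = 0 -> 1 <= n <= k -> 1 <= p -> Pcount p n d k = 0) /\
  (d = 1 -> 1 <= n -> n = p -> Pcount p n d k = k ^ n) /\
  (d = 1 -> 1 <= n -> n <> p -> Pcount p n d k = 0) /\
  (2 <= d -> 1 <= n -> p = 0 -> Pcount p n d k = 0) /\
  (2 <= d -> 1 <= n -> 1 <= p ->
     Pcount p n d k =
       k * \sum_(1 <= j < n.+1) \sum_(0 <= i < p)
             'C(p.-1, i) * Pcount i j d.-1 1 * Pcount (p.-1 - i) (n - j) d k).
Proof.
split; [|split; [|split; [|split; [|split; [|split; [|split; [|split]]]]]]].
- by move=> -> lt_kn; rewrite Pcount_cols0 bin_small ?muln0.
- by move=> -> ->; rewrite Pcount_rows0.
- by move=> -> p_gt0; rewrite Pcount_rows0; case: p p_gt0.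
- by move=> -> _ ->; rewrite Pcount_cols0 mul1n.
- by move=> -> _ p_gt0; rewrite Pcount_cols0; case: p p_gt0.
- by move=> -> _ <-; rewrite Pcount_charts chart_count1 eqxx.
- by move=> -> _ /eqP/negbTE n_neq_p; rewrite Pcount_charts chart_count1 n_neq_p.
- by case: d => [|[|D]] // _ n_gt0 ->; rewrite Pcount_charts chart_count_ranks0.
case: d => [|[|D]] // _ n_gt0; case: p => [|p] // _.
rewrite Pcount_charts chart_count_rec //; symmetry.
under eq_bigr => j _ do rewrite big_mkord.
rewrite exchange_big big_distrr /=; apply: eq_bigr => i _.
rewrite [RHS]mulnCA [in RHS]big_distrr /=; congr (k * _); apply: eq_bigr => j _.
by rewrite !Pcount_charts mulnA.
Qed.
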